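(* Let $k$ be an algebraically closed field of characteristic $p$ and $\pi: X\to Y$ a $\mathbb Z/p$-cover of smooth projective curves over $k$. Suppose that $y$ is an Artin–Schreier generator of $\pi$ in global standard form. Then $z := y^{p-1}$ is a magical element for $\pi$, i.e. $\mathrm{ord}_P(z)\ge -d'_P$ for every $P\in X(k)$ and $\mathrm{tr}_{k(X)/k(Y)}(z)\ne 0$; moreover, the dual of $z$ with respect to the trace pairing is $z^\vee := z-2$, i.e. $\mathrm{tr}_{k(X)/k(Y)}(g_1^*(z)g_2^*(z^\vee)) = \delta_{g_1,g_2}$ for all $g_1,g_2\in\mathbb Z/p$.
   Context: An Artin–Schreier generator of $\pi$ is $y\in k(X)$ with $k(X) = k(Y)(y)$, $y^p - y = f\in k(Y)$, and $\sigma^*(y) = y+1$ for a generator $\sigma$ of $\mathbb Z/p$. It is in local standard form at $Q\in Y(k)$ if $f$ is regular at $Q$ or has a pole at $Q$ of order not divisible by $p$; it is in global standard form if it is in local standard form at every $Q\in Y(k)$ and $f\notin k$. For $P\in X(k)$ with lower ramification groups $G_{P,i}$, $d'_P := \sum_{i\ge1}(\#G_{P,i}-1)$. *)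

From HB Require Import structures.
From mathcomp Require Import all_boot all_order all_algebra all_fingroup all_field.
From Stdlib Require Import ClassicalEpsilon.
Set Implicit Arguments. Unset Strict Implicit. Unset Printing Implicit Defensive.
Import Order.TTheory GRing.Theory Num.Theory.
Local Open Scope ring_scope.

Definition pb (P : Prop) : bool :=
  if excluded_middle_informative P then true else false.

(* A place (= a k-point of the smooth projective curve whose function field
   is F): a normalized discrete valuation ord : F -> Z which is trivial on the
   constants (those x with [const x]).  The value ord 0 is irrelevant (ord 0
   is "+oo"); every use below guards against x = 0. *)
Definition is_place (F : fieldType) (const : F -> Prop) (ord : F -> int) : Prop :=
  [/\ forall x y : F, x != 0 -> y != 0 -> ord (x * y) = ord x + ord y,
      forall x y : F, x != 0 -> y != 0 -> x + y != 0 ->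
        Num.min (ord x) (ord y) <= ord (x + y),
      forall x : F, const x -> x != 0 -> ord x = 0 &
      exists t : F, t != 0 /\ ord t = 1].

Definition ord_ge (F : fieldType) (ord : F -> int) (x : F) (n : int) : Prop :=
  x = 0 \/ n <= ord x.

(* Sum of a series of natural numbers, in nat extended by +oo (= None). *)
Definition series_nat (a : nat -> nat) : option nat :=
  match excluded_middle_informative (exists N, forall M, (N <= M)%N -> a M = 0%N) with
  | left H => Some (\sum_(i < proj1_sig (constructive_indefinite_description _ H)) a i)%N
  | right _ => None
  end.

(* K is the function field of a curve over k (via iota): K is a finite
   extension of a purely transcendental extension k(t). *)
Definition function_field_1 (k : fieldType) (K : fieldType)
    (iota : {rmorphism k -> K}) : Prop :=
  exists t : K,
    (forall q : {poly k}, q != 0 -> (map_poly iota q).[t] != 0) /\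
    exists (n : nat) (b : 'I_n -> K),
      forall x : K, exists (d : {poly k}) (a : 'I_n -> {poly k}),
        (map_poly iota d).[t] != 0 /\
        (map_poly iota d).[t] * x = \sum_(i < n) (map_poly iota (a i)).[t] * b i.

Section Cover.
Variables (k : fieldType) (K : fieldType) (iota : {rmorphism k -> K})
          (L : splittingFieldType K).

Definition constK (x : K) : Prop := exists a : k, x = iota a.
Definition constL (x : L) : Prop := exists a : k, x = (iota a)%:A.

Definition pointY (ord : K -> int) := is_place constK ord.
Definition pointX (ord : L -> int) := is_place constL ord.

Definition Gcov : {set gal_of {:L}} := 'Gal({:L} / 1%VS)%g.

Definition ram_group (ord : L -> int) (i : nat) : {set gal_of {:L}} :=
  [set s in Gcov | pb (forall x : L, ord_ge ord x 0 ->
                                    ord_ge ord (s x - x) (i.+1)%:Z)].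

Definition dprime (ord : L -> int) : option nat :=
  series_nat (fun i => if i is 0 then 0%N else (#|ram_group ord i| - 1)%N).

Definition ord_ge_neg_dprime (ord : L -> int) (x : L) : Prop :=
  match dprime ord with
  | Some d => ord_ge ord x (- (d%:Z))
  | None => True
  end.

Definition local_standard_form (p : nat) (f : K) (ord : K -> int) : Prop :=
  ord_ge ord f 0 \/ (f != 0 /\ ord f < 0 /\ ~~ (p %| `|ord f|)%N).

Definition AS_generator (p : nat) (sigma : gal_of {:L}) (y : L) (f : K) : Prop :=
  [/\ <<1%VS; y>>%VS = {:L}%VS, y ^+ p - y = f%:A & sigma y = y + 1].

Definition global_standard_form (p : nat) (f : K) : Prop :=
  (forall ord : K -> int, pointY ord -> local_standard_form p f ord) /\ ~ constK f.
End Cover.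

From HB Require Import structures.
From mathcomp Require Import all_boot all_order all_algebra all_fingroup all_field.
From mathcomp Require Import cyclic zify ring.
From Stdlib Require Import ClassicalEpsilon.
Set Implicit Arguments. Unset Strict Implicit. Unset Printing Implicit Defensive.
Import Order.TTheory GRing.Theory Num.Theory.
Local Open Scope ring_scope.

(* Write sigma^c(y) = y + c.  Since sum_(c in F_p) c^i is 0 for i < p-1 and -1
   for i = p-1, Tr(y^j) = 0 for j < p-1 and Tr(y^(p-1)) = -1; together with
   y^p = y + f this gives Tr(z ((y + m)^(p-1) - 2)) = 1 - m^(p-1), which is 1 for
   m = 0 and 0 otherwise, i.e. z - 2 is dual to z.
   For the pole bound only the points P with ord_P(y) = -n < 0 matter.  There
   ord_P(f) = -pn, and as f is in standard form at the point Q below P, p does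
   not divide pn/d, d the ramification index.  Hence the terms a_j y^j (j < p) of
   any x have pairwise distinct orders, so ord_P(x) >= 0 forces every term to be
   integral, and each term is then moved by sigma^c by order >= n+1.  Thus
   G_(P,i) = G for 1 <= i <= n and d'_P >= n(p-1) = -ord_P(z). *)

Section Valuation.
Variables (F : fieldType) (v : F -> int).
Hypothesis vM : forall {x y : F}, x != 0 -> y != 0 -> v (x * y) = v x + v y.
Hypothesis vU : forall {x y : F}, x != 0 -> y != 0 -> x + y != 0 ->
  Num.min (v x) (v y) <= v (x + y).

Lemma valuation1 : v 1 = 0.
Proof. by apply: (addrI (v 1)); rewrite addr0 -vM ?oner_neq0 ?mulr1. Qed.

Lemma valuationV x : x != 0 -> v x^-1 = - v x.
Proof.
by move=> x0; apply/eqP; rewrite -addr_eq0 addrC -vM ?invr_neq0 // mulfV // valuation1.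
Qed.

Lemma valuationN x : x != 0 -> v (- x) = v x.
Proof.
move=> x0; have N1 : (-1 : F) != 0 by rewrite oppr_eq0 oner_neq0.
have vN1 : v (-1) = 0.
  by have := vM N1 N1; rewrite mulrNN mulr1 valuation1; set a := v (-1); lia.
by rewrite -mulN1r vM // vN1 add0r.
Qed.

Lemma valuationX x m : x != 0 -> v (x ^+ m) = m%:Z * v x.
Proof.
move=> x0; elim: m => [|m IH]; first by rewrite expr0 valuation1 mul0r.
by rewrite exprS vM ?expf_neq0 // IH -addn1 PoszD mulrDl mul1r addrC.
Qed.

Lemma valuationXz x (m : int) : x != 0 -> v (x ^ m) = m * v x.
Proof.
move=> x0; case: m => m; first exact: valuationX.
by rewrite NegzE valuationV ?expf_neq0 // valuationX // mulNr.
Qed.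

Lemma ord_geW x m n : ord_ge v x m -> n <= m -> ord_ge v x n.
Proof. by case=> [->|h] hnm; [left | right; apply: le_trans h]. Qed.

Lemma ord_geM x y m n : ord_ge v x m -> ord_ge v y n -> ord_ge v (x * y) (m + n).
Proof.
case=> [->|hx]; first by rewrite mul0r; left.
case=> [->|hy]; first by rewrite mulr0; left.
have [->|x0] := eqVneq x 0; first by rewrite mul0r; left.
have [->|y0] := eqVneq y 0; first by rewrite mulr0; left.
by right; rewrite vM // lerD.
Qed.

Lemma ord_geD x y m : ord_ge v x m -> ord_ge v y m -> ord_ge v (x + y) m.
Proof.
case=> [->|hx]; first by rewrite add0r.
case=> [->|hy]; first by rewrite addr0; right.
have [->|x0] := eqVneq x 0; first by rewrite add0r; right.
have [->|y0] := eqVneq y 0; first by rewrite addr0; right.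
have [->|s0] := eqVneq (x + y) 0; first by left.
by right; apply: le_trans (vU x0 y0 s0); rewrite le_min hx hy.
Qed.

Lemma ord_ge_sum (I : Type) (r : seq I) (P : pred I) (G : I -> F) m :
  (forall i, P i -> ord_ge v (G i) m) -> ord_ge v (\sum_(i <- r | P i) G i) m.
Proof.
move=> hG; apply: (big_ind (fun x => ord_ge v x m)) => //; first by left.
by move=> x y; apply: ord_geD.
Qed.

Lemma ord_geMn x m n : ord_ge v x m -> ord_ge v (x *+ n) m.
Proof.
by move=> hx; elim: n => [|n IH]; [rewrite mulr0n; left | rewrite mulrS; apply: ord_geD].
Qed.

Lemma ord_ge_natr n : ord_ge v n%:R 0.
Proof. by apply: ord_geMn; right; rewrite valuation1. Qed.

Lemma valuationDr_gt x y : x != 0 -> ord_ge v y (v x + 1) ->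
  x + y != 0 /\ v (x + y) = v x.
Proof.
move=> x0 hy; have [->|y0] := eqVneq y 0; first by rewrite addr0.
have {hy} vxy : v x < v y by case: hy => [/eqP|]; rewrite ?(negPf y0) // lezD1.
have s0 : x + y != 0.
  by apply: contraTneq vxy => /eqP; rewrite addr_eq0 => /eqP ->; rewrite valuationN // ltxx.
have Ny : - y != 0 by rewrite oppr_eq0.
split=> //; have := vU x0 y0 s0; have := vU s0 Ny.
rewrite addrK valuationN // => /(_ x0); rewrite !ge_min; move: vxy.
by set a := v x; set b := v y; set c := v (x + y); move=> ? /orP[] ? /orP[] ?; lia.
Qed.

Lemma ord_ge_sum_distinct (I : finType) (u : I -> F) m :
  (forall i j, i != j -> u i != 0 -> u j != 0 -> v (u i) != v (u j)) ->
  ord_ge v (\sum_i u i) m -> forall i, ord_ge v (u i) m.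
Proof.
move=> hu hsum i; have [->|ui] := eqVneq (u i) 0; first by left.
have [i0 ui0 i0_min] := arg_minP (fun j => v (u j)) (ui : i \in [pred j | u j != 0]).
have rest : ord_ge v (\sum_(j | j != i0) u j) (v (u i0) + 1).
  apply: ord_ge_sum => j ji0; have [->|uj] := eqVneq (u j) 0; first by left.
  by right; rewrite lezD1 lt_neqAle eq_sym hu // i0_min.
have [s0 vs] := valuationDr_gt ui0 rest.
rewrite (bigD1 i0) //= in hsum; right; case: hsum => [/eqP|]; first by rewrite (negPf s0).
by rewrite vs => /le_trans; apply; apply: i0_min.
Qed.
End Valuation.

Lemma pbT (P : Prop) : P -> pb P.
Proof. by rewrite /pb; case: excluded_middle_informative. Qed.

Lemma pbE (P : Prop) : pb P -> P.
Proof. by rewrite /pb; case: excluded_middle_informative. Qed.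

Section ValueGroup.
Variables (F : fieldType) (v : F -> int).
Hypothesis vM : forall {x y : F}, x != 0 -> y != 0 -> v (x * y) = v x + v y.
Hypothesis value_gt0 : exists a : F, a != 0 /\ 0 < v a.

(* [value_gen] is the positive generator of the value group [v F^* = value_gen Z]. *)
Definition positive_value (m : nat) :=
  (0 < m)%N && pb (exists a : F, a != 0 /\ v a = m%:Z).

Lemma exists_positive_value : exists m, positive_value m.
Proof.
have [a [a0 va]] := value_gt0; exists `|v a|%N.
by rewrite /positive_value absz_gt0 gt_eqF //; apply: pbT; exists a; rewrite gtz0_abs.
Qed.

Definition value_gen := ex_minn exists_positive_value.

Lemma value_genP : [/\ (0 < value_gen)%N, exists2 a, a != 0 & v a = value_gen%:Z &
  forall m, positive_value m -> (value_gen <= m)%N].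
Proof.
rewrite /value_gen; case: ex_minnP => m /andP[m0 /pbE[a []]] hmin.
by split=> //; exists a.
Qed.

Lemma value_gen_dvd a : a != 0 -> (value_gen%:Z %| v a)%Z.
Proof.
move=> a0; have [d0 [g g0 vg] dmin] := value_genP; set d := value_gen in d0 vg dmin *.
have d0z : d%:Z != 0 by rewrite eqz_nat -lt0n.
pose b := a * g ^ (- (v a %/ d)%Z).
have b0 : b != 0 by rewrite mulf_neq0 // expfz_neq0.
have vb : v b = (v a %% d)%Z.
  by rewrite vM ?expfz_neq0 // valuationXz // vg mulNr.
apply/dvdz_mod0P/eqP; rewrite eq_le modz_ge0 // andbT leNgt; apply/negP => r0.
have pos : positive_value `|(v a %% d)%Z|%N.
  by rewrite /positive_value absz_gt0 gt_eqF //; apply: pbT; exists b; rewrite gtz0_abs.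
by have := dmin _ pos; rewrite leqNgt -ltz_nat gtz0_abs // ltz_pmod ?ltz_nat.
Qed.

Local Notation d := value_gen.
Local Notation w x := (v x %/ d)%Z.

Lemma value_gen_neq0 : d%:Z != 0.
Proof. by have [d0 _ _] := value_genP; rewrite eqz_nat -lt0n. Qed.

Lemma divz_value_genK {a} : a != 0 -> w a * d = v a.
Proof. by move=> a0; rewrite divzK // value_gen_dvd. Qed.

Lemma is_place_divz_value_gen (const : F -> Prop) :
  (forall x y, x != 0 -> y != 0 -> x + y != 0 -> Num.min (v x) (v y) <= v (x + y)) ->
  (forall x, const x -> x != 0 -> v x = 0) ->
  is_place const (fun x => w x).
Proof.
have d_gt0 : 0 < d%:Z by have [] := value_genP.
move=> vU vC; split.
- move=> a b a0 b0; apply: (mulIf value_gen_neq0).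
  by rewrite mulrDl !divz_value_genK ?mulf_neq0 ?vM.
- move=> a b a0 b0 s0; have := vU _ _ a0 b0 s0.
  move: (divz_value_genK a0) (divz_value_genK b0) (divz_value_genK s0).
  move: (w a) (w b) (w (a + b)) => ka kb ks <- <- <-.
  by rewrite !ge_min !ler_pM2r.
- by move=> x /vC vx /vx ->; rewrite div0z.
- have [_ [g g0 vg] _] := value_genP.
  by exists g; rewrite vg divzz value_gen_neq0.
Qed.
End ValueGroup.

Lemma prime_dvdz_ratio (p : nat) (e d n a r : int) : prime p -> d != 0 ->
  e * d = p%:Z * n -> ~~ (p %| `|e|)%N -> a * d = r * n -> (p %| `|r|)%N.
Proof.
move=> pr d0 hed pe had.
have hpr : a * p%:Z = r * e.
  by apply: (mulIf d0); rewrite mulrAC had -mulrA [n * _]mulrC -hed mulrA.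
have : (p %| `|r| * `|e|)%N by rewrite -abszM -hpr abszM dvdn_mull.
by rewrite Euclid_dvdM // (negPf pe) orbF.
Qed.

Lemma series_nat_ge (a : nat -> nat) s m :
  series_nat a = Some s -> (\sum_(i < m) a i <= s)%N.
Proof.
rewrite /series_nat; case: excluded_middle_informative => // H [<-].
case: constructive_indefinite_description => N aN /=.
rewrite -!(big_mkord xpredT); case: (leqP m N) => [mN | Nm].
  by rewrite (big_cat_nat (leq0n m) mN) leq_addr.
rewrite (big_cat_nat (leq0n N) (ltnW Nm)) /=.
suff -> : (\sum_(N <= i < m) a i = 0)%N by rewrite addn0.
by rewrite big_nat_cond big1 // => i /andP[/andP[Ni _] _]; apply: aN.
Qed.

Lemma prime_pred_gt0 p : prime p -> (0 < p.-1)%N.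
Proof. by move=> pr; rewrite -subn1 subn_gt0 prime_gt1. Qed.

Section PowerSums.
Variables (F : fieldType) (p : nat).
Hypotheses (pr : prime p) (ch : p \in [pchar F]).

Lemma natr_neq0_pchar n : (0 < n < p)%N -> (n%:R : F) != 0.
Proof.
case/andP=> n0 np; rewrite -(dvdn_pcharf ch).
by apply: contraTN np => /(dvdn_leq n0); rewrite -leqNgt.
Qed.

Lemma natr_exp_pred n : (n%:R : F) != 0 -> (n%:R : F) ^+ p.-1 = 1.
Proof.
move=> n0; apply: (mulfI n0); rewrite mulr1 -exprS prednK ?prime_gt0 //.
by rewrite -(pFrobenius_autE ch) rmorph_nat.
Qed.

Definition power_sum i := \sum_(c < p) (c%:R : F) ^+ i.

Lemma power_sum_binomial m : (0 < m)%N -> \sum_(i < m) power_sum i *+ 'C(m, i) = 0.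
Proof.
move=> m0; have : \sum_(0 <= c < p) ((c.+1%:R : F) ^+ m - c%:R ^+ m) = 0.
  by rewrite telescope_sumr // (pcharf0 ch) expr0n /= eqn0Ngt m0 subr0.
rewrite big_mkord => tele; apply: etrans tele; apply: esym.
under eq_bigr => c _ do rewrite -addn1 natrD exprD1n big_ord_recr /= binn mulr1n addrK.
by rewrite exchange_big; apply: eq_bigr => i _; rewrite sumrMnl.
Qed.

Lemma power_sum_small i : (i < p.-1)%N -> power_sum i = 0.
Proof.
elim/ltn_ind: i => i IH ip.
have i1 : (i.+1%:R : F) != 0 by rewrite natr_neq0_pchar // -ltn_predRL.
have := @power_sum_binomial i.+1 (ltn0Sn i); rewrite big_ord_recr /= big1 ?add0r.
  by rewrite binSn -mulr_natr => /eqP; rewrite mulf_eq0 (negPf i1) orbF => /eqP.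
by move=> j _; rewrite IH ?mul0rn // (ltn_trans _ ip).
Qed.

Lemma power_sum_pred : power_sum p.-1 = -1.
Proof.
rewrite /power_sum -(big_mkord xpredT (fun c => (c%:R : F) ^+ p.-1)).
rewrite big_ltn ?prime_gt0 // big_add1 expr0n eqn0Ngt prime_pred_gt0 // add0r.
rewrite (eq_big_nat _ _ (F2 := fun=> 1)) => [|c /andP[_ c_lt]].
  by rewrite sumr_const_nat subn0 -subn1 natrB ?prime_gt0 // (pcharf0 ch) sub0r.
by rewrite natr_exp_pred // natr_neq0_pchar // -ltn_predRL.
Qed.
End PowerSums.

Lemma galTrace_mull (K : fieldType) (L : splittingFieldType K) (U E : {aspace L}) b x :
  (U <= E)%VS -> b \in U -> galTrace U E (b * x) = b * galTrace U E x.
Proof.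
move=> sUE Ub; rewrite /galTrace mulr_sumr; apply: eq_bigr => s Gs.
by rewrite rmorphM /= (fixed_gal sUE Gs Ub).
Qed.

Section CyclicTrace.
Variables (K : fieldType) (L : splittingFieldType K) (p : nat) (sigma : gal_of {:L}).
Hypotheses (pr : prime p) (cardG : #|Gcov L| = p) (gen : <[sigma]>%g = Gcov L).

Local Notation Tr := (galTrace 1%VS {:L}).

Lemma order_sigma : #[sigma]%g = p.
Proof. by rewrite orderE gen. Qed.

Lemma Gcov_expg s : s \in Gcov L -> exists i : 'I_p, s = (sigma ^+ i)%g.
Proof.
rewrite -gen => /cycleP[i ->]; have ip : (i %% p < p)%N by rewrite ltn_pmod ?prime_gt0.
by exists (Ordinal ip); rewrite /= -order_sigma expg_mod_order.
Qed.

Lemma galTrace_cyclic x : Tr x = \sum_(i < p) (sigma ^+ i)%g x.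
Proof.
rewrite /galTrace; have -> : 'Gal({:L} / 1%VS)%g = [set (sigma ^+ (i : 'I_p))%g | i in 'I_p].
  apply/setP => s; apply/idP/imsetP => [/Gcov_expg[i ->] | [i _ ->]]; first by exists i.
  by have := mem_cycle sigma i; rewrite gen.
rewrite big_imset //= => i j _ _ /eqP.
by rewrite eq_expg_ord ?order_sigma // => /eqP.
Qed.

Hypothesis chL : p \in [pchar L].
Variable w : L.
Hypothesis sigmaX_w : forall c, (sigma ^+ c)%g w = w + c%:R.

Lemma galTrace_exp j :
  Tr (w ^+ j) = \sum_(i < j.+1) w ^+ (j - i) * power_sum L p i *+ 'C(j, i).
Proof.
rewrite galTrace_cyclic; under eq_bigr do rewrite rmorphXn /= sigmaX_w exprDn.
by rewrite exchange_big; apply: eq_bigr => i _; rewrite sumrMnl -mulr_sumr /power_sum.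
Qed.

Lemma galTrace_exp_small j : (j < p.-1)%N -> Tr (w ^+ j) = 0.
Proof.
move=> jp; rewrite galTrace_exp big1 // => i _.
by rewrite power_sum_small ?mulr0 ?mul0rn // (leq_ltn_trans (leq_ord i) jp).
Qed.

Lemma galTrace_exp_pred : Tr (w ^+ p.-1) = -1.
Proof.
rewrite galTrace_exp big_ord_recr /= big1 => [|i _]; last first.
  by rewrite power_sum_small ?mulr0 ?mul0rn.
by rewrite add0r subnn expr0 mul1r power_sum_pred // binn mulr1n.
Qed.

Variable b : L.
Hypotheses (b1 : b \in 1%VS) (w_expp : w ^+ p = w + b).

Lemma galTrace_exp_pred_mul i :
  (i < p.-1)%N -> Tr (w ^+ p.-1 * w ^+ (p.-1 - i)) = - (i == 0%N)%:R.
Proof.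
move=> ip; set r := (p.-1 - i)%N; have r0 : (0 < r)%N by rewrite subn_gt0.
have -> : w ^+ p.-1 * w ^+ r = w ^+ r + b * w ^+ r.-1.
  rewrite -{1}(prednK r0) exprS mulrA -exprSr prednK ?prime_gt0 // w_expp.
  by rewrite mulrDl -exprS prednK.
rewrite raddfD /= galTrace_mull ?subvf // (galTrace_exp_small (j := r.-1)) ?mulr0 ?addr0.
  case: eqP => [i0 | /eqP i0]; first by rewrite /r i0 subn0 galTrace_exp_pred.
  by rewrite galTrace_exp_small ?oppr0 // /r; lia.
by rewrite /r; lia.
Qed.

Lemma galTrace_mul_dual n :
  Tr (w ^+ p.-1 * ((w + n%:R) ^+ p.-1 - 2%:R)) = 1 - n%:R ^+ p.-1.
Proof.
have p1 := prime_pred_gt0 pr.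
rewrite mulrBr raddfB /= mulr_natr raddfMn /= galTrace_exp_pred.
rewrite exprDn mulr_sumr raddf_sum big_ord_recr /= subnn expr0 mul1r mulrnAr raddfMn /=.
rewrite [w ^+ p.-1 * _]mulrC galTrace_mull ?subvf ?rpredX ?rpred_nat //.
rewrite galTrace_exp_pred binn mulr1n.
under eq_bigr => i _ do
  rewrite mulrnAr raddfMn /= mulrA mulrC galTrace_mull ?subvf ?rpredX ?rpred_nat //.
under eq_bigr => i _ do rewrite galTrace_exp_pred_mul //.
rewrite (bigD1 (Ordinal p1)) //= big1 => [|i /negPf]; last first.
  by rewrite -val_eqE /= eq_sym => ->; rewrite oppr0 mulr0 mul0rn.
by rewrite expr0 mul1r bin0 mulr1n addr0; ring.
Qed.
End CyclicTrace.

Section ArtinSchreierCover.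
Variables (k : fieldType) (p : nat) (K : fieldType) (iota : {rmorphism k -> K})
  (L : splittingFieldType K) (sigma : gal_of {:L}) (y : L) (f : K).
Hypotheses (pr : prime p) (chk : p \in [pchar k]).
Hypotheses (cardG : #|Gcov L| = p) (gen : <[sigma]>%g = Gcov L).
Hypothesis AS : AS_generator p sigma y f.

Local Notation Tr := (galTrace 1%VS {:L}).

Lemma pchar_L : p \in [pchar L].
Proof. by apply: (rmorph_pchar (in_alg L)); apply: (rmorph_pchar iota). Qed.

Lemma sigmaX_y c : (sigma ^+ c)%g y = y + c%:R.
Proof.
have [_ _ sigma_y] := AS; elim: c => [|c IH]; first by rewrite expg0 gal_id addr0.
by rewrite expgSr galM ?memvf // IH rmorphD /= rmorph_nat sigma_y -addrA nat1r.
Qed.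

Lemma y_neq0 : y != 0.
Proof.
have [_ _ sigma_y] := AS; apply: contra_neq (oner_neq0 L) => y0.
by move: sigma_y; rewrite y0 rmorph0 add0r.
Qed.

Lemma y_expp : y ^+ p = y + f%:A.
Proof. by have [_ /eqP + _] := AS; rewrite subr_eq addrC => /eqP. Qed.

Lemma galTrace_z : Tr (y ^+ p.-1) = -1.
Proof. exact: (galTrace_exp_pred pr cardG gen pchar_L sigmaX_y). Qed.

Lemma galTrace_z_dual g1 g2 : g1 \in Gcov L -> g2 \in Gcov L ->
  Tr (g1 (y ^+ p.-1) * g2 (y ^+ p.-1 - 2%:R)) = (g1 == g2)%:R.
Proof.
move=> G1 G2; set h := (g2 * g1^-1)%g.
(* By invariance of the trace under g1 it suffices to let h = sigma^m act on z - 2. *)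
have Gh : h \in Gcov L by move: G1 G2; rewrite -gen => G1 G2; rewrite groupM ?groupV.
have hg1 : (h * g1)%g = g2 by rewrite mulgKV.
rewrite -{1}hg1 galM ?memvf // -rmorphM galTrace_gal ?memvf //.
have [m hm] := Gcov_expg pr cardG gen Gh.
have -> : (g1 == g2) = (m == 0%N :> nat).
  rewrite eq_sym eq_mulgV1 -/h hm -order_dvdn (order_sigma cardG gen).
  by case: (posnP m) => [-> | m0]; rewrite ?dvdn0 // gtnNdvd // gtn_eqF.
have f1 : (f%:A : L) \in 1%VS by apply/vlineP; exists f.
rewrite hm rmorphB rmorphXn rmorph_nat /= sigmaX_y.
rewrite (galTrace_mul_dual pr cardG gen pchar_L sigmaX_y f1 y_expp).
case: (posnP m) => [-> | m0]; first by rewrite expr0n gtn_eqF ?prime_pred_gt0 // subr0.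
have mR : (m%:R : L) != 0 by apply: (natr_neq0_pchar (F := L) pchar_L); rewrite m0 /=.
by rewrite (natr_exp_pred pr pchar_L mR) subrr.
Qed.

Hypothesis galL : galois 1%VS {:L}.

Lemma AS_basis x : exists a : 'I_p -> K, x = \sum_(j < p) (a j)%:A * y ^+ j.
Proof.
have [gen_y _ _] := AS; set P := Fadjoin_poly 1%AS y x.
have /fin_all_exists[a Ea] : forall j : 'I_p, exists c : K, P`_j = c%:A.
  by move=> j; apply/vlineP; apply: (polyOverP (Fadjoin_polyOver _ _ _)).
have sizeP : (size P <= p)%N.
  apply: leq_trans (size_Fadjoin_poly _ _ _) _.
  by rewrite adjoin_degreeE gen_y galois_dim // -cardG.
rewrite -{1}(@Fadjoin_poly_eq _ _ 1%AS y x) ?gen_y ?memvf // (horner_coef_wide _ sizeP).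
by exists a; apply: eq_bigr => j _; rewrite Ea.
Qed.

Section Place.
Variable ord : L -> int.
Hypotheses (X_ord : pointX iota ord) (gsf : global_standard_form iota p f).

Let ordM : forall x y : L, x != 0 -> y != 0 -> ord (x * y) = ord x + ord y.
Proof. by case: X_ord. Qed.
Let ordU : forall x y : L, x != 0 -> y != 0 -> x + y != 0 ->
  Num.min (ord x) (ord y) <= ord (x + y).
Proof. by case: X_ord. Qed.

Definition ord_res (a : K) := ord a%:A.

Lemma alg_eq0 (a : K) : ((a%:A : L) == 0) = (a == 0).
Proof. by rewrite -in_algE fmorph_eq0. Qed.

Lemma ord_resM a b : a != 0 -> b != 0 -> ord_res (a * b) = ord_res a + ord_res b.
Proof. by move=> a0 b0; rewrite /ord_res -!in_algE rmorphM ordM ?fmorph_eq0. Qed.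

Lemma ord_resU a b : a != 0 -> b != 0 -> a + b != 0 ->
  Num.min (ord_res a) (ord_res b) <= ord_res (a + b).
Proof.
by move=> a0 b0 s0; rewrite /ord_res scalerDl; apply: ordU; rewrite -?scalerDl alg_eq0.
Qed.

Lemma ord_res_const a : constK iota a -> a != 0 -> ord_res a = 0.
Proof.
have [_ _ ordC _] := X_ord; move=> [c ->] c0.
by apply: ordC; [exists c | rewrite alg_eq0].
Qed.

Section Pole.
Variable n : nat.
Hypotheses (ord_y : ord y = - n%:Z) (n_gt0 : (0 < n)%N).

Lemma ord_res_f : f != 0 /\ ord_res f = - (p * n)%N%:Z.
Proof.
have yp0 : y ^+ p != 0 by rewrite expf_neq0 // y_neq0.
have ord_yp : ord (y ^+ p) = - (p * n)%N%:Z.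
  by rewrite (valuationX ordM _ y_neq0) ord_y PoszM mulrN.
have ord_Ny : ord_ge ord (- y) (ord (y ^+ p) + 1).
  right; rewrite (valuationN ordM y_neq0) ord_y ord_yp.
  by have := prime_gt1 pr; move: n_gt0; nia.
have [s0 vs] := valuationDr_gt ordM ordU yp0 ord_Ny.
have fA : (f%:A : L) = y ^+ p - y by rewrite y_expp addrAC subrr add0r.
by rewrite -alg_eq0 /ord_res fA -ord_yp.
Qed.

Lemma ord_res_pos : exists a, a != 0 /\ 0 < ord_res a.
Proof.
have [f0 ord_f] := ord_res_f; exists f^-1; split; first by rewrite invr_eq0.
rewrite (valuationV ord_resM f0) ord_f opprK; have := prime_gt0 pr; move: n_gt0; nia.
Qed.

(* [ordY] is the point of Y below the point of X given by [ord], and [d] is the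
   ramification index. *)
Local Notation d := (value_gen ord_res_pos).
Local Notation ordY a := (ord_res a %/ d)%Z.

Lemma pointY_ordY : pointY iota (fun a => ordY a).
Proof. exact: is_place_divz_value_gen ord_resM ord_res_pos _ ord_resU ord_res_const. Qed.

Lemma ordY_f_index : exists e : int, e * d = p%:Z * n%:Z /\ ~~ (p %| `|e|)%N.
Proof.
have [f0 ord_f] := ord_res_f; have fd := divz_value_genK ord_resM ord_res_pos f0.
have d_gt0 : (0 < d)%N by have [] := value_genP ord_res_pos.
have [+ _] := gsf; move=> /(_ _ pointY_ordY) [[/eqP|f_ge0]|[_ [_ pe]]].
- by rewrite (negPf f0).
- by move: fd; rewrite ord_f PoszM; have := prime_gt0 pr; move: f_ge0 n_gt0 d_gt0; nia.
- by exists (- ordY f); rewrite abszN; split; rewrite // mulNr fd ord_f opprK PoszM.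
Qed.

Lemma ord_term a j : a != 0 -> ord (a%:A * y ^+ j) = ord_res a - (j * n)%N%:Z.
Proof.
move=> a0; rewrite ordM ?alg_eq0 ?expf_neq0 ?y_neq0 //.
by rewrite (valuationX ordM _ y_neq0) ord_y PoszM mulrN.
Qed.

Lemma ord_term_inj a b i j : a != 0 -> b != 0 -> (i < p)%N -> (j < p)%N ->
  ord_res a - (i * n)%N%:Z = ord_res b - (j * n)%N%:Z -> i = j.
Proof.
move=> a0 b0 ip jp; have [e [ed pe]] := ordY_f_index.
rewrite -(divz_value_genK ord_resM ord_res_pos a0) -(divz_value_genK ord_resM ord_res_pos b0).
move: (ordY a) (ordY b) => A B eqAB.
have : (A - B) * d = (i%:Z - j%:Z) * n by move: eqAB; rewrite !PoszM; lia.
move/(prime_dvdz_ratio pr (value_gen_neq0 ord_res_pos) ed pe) => dvd_ij.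
have lt_ij : (`|i%:Z - j%:Z| < p)%N by lia.
case: (posnP `|i%:Z - j%:Z|) => [/eqP | ij0]; first by rewrite distn_eq0 => /eqP.
by rewrite gtnNdvd in dvd_ij.
Qed.

Lemma ord_expDn_sub (c j : nat) :
  ord_ge ord ((y + c%:R) ^+ j - y ^+ j) (- (j.-1 * n)%N%:Z).
Proof.
rewrite [y + _]addrC exprDn big_ord_recr /= subnn expr0 mul1r binn mulr1n addrK.
apply: (ord_ge_sum ordU) => i _; apply: (ord_geMn ordU).
rewrite -[X in ord_ge _ _ X]add0r -natrX; apply: (ord_geM ordM (ord_ge_natr ordM ordU _)).
right; rewrite (valuationX ordM _ y_neq0) ord_y mulrN lerN2 -PoszM lez_nat leq_mul2r.
by rewrite -ltnS prednK ?ltn_ord ?orbT // (leq_ltn_trans _ (ltn_ord i)).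
Qed.

Lemma gal_sub_ord_ge s x : s \in Gcov L -> ord_ge ord x 0 -> ord_ge ord (s x - x) n.+1%:Z.
Proof.
move=> /(Gcov_expg pr cardG gen)[c ->]; have [a ->] := AS_basis x => x_ge0.
have term_neq0 j : (a j)%:A * y ^+ j != 0 -> a j != 0.
  by apply: contraNneq => ->; rewrite scale0r mul0r.
have distinct i j : i != j -> (a i)%:A * y ^+ i != 0 -> (a j)%:A * y ^+ j != 0 ->
    ord ((a i)%:A * y ^+ i) != ord ((a j)%:A * y ^+ j).
  move=> ij /term_neq0 ai /term_neq0 aj; rewrite !ord_term //.
  apply: contra ij => /eqP /(ord_term_inj ai aj (ltn_ord i) (ltn_ord j)) eq_ij.
  by apply/eqP/val_inj.
have terms_ge0 := ord_ge_sum_distinct ordM ordU distinct x_ge0.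
rewrite rmorph_sum /= -sumrB; apply: (ord_ge_sum ordU) => j _.
rewrite rmorphM /= linearZ /= rmorph1 rmorphXn /= sigmaX_y -mulrBr.
have [-> | aj] := eqVneq (a j) 0; first by rewrite scale0r mul0r; left.
case: (posnP j) => [j0 | j_gt0]; first by rewrite j0 !expr0 subrr mulr0; left.
have uj0 : (a j)%:A * y ^+ j != 0 by rewrite mulf_neq0 ?alg_eq0 ?expf_neq0 ?y_neq0.
have aj_ge : (j * n)%N%:Z <= ord_res (a j).
  by case: (terms_ge0 j) => [/eqP|]; rewrite ?(negPf uj0) // ord_term // subr_ge0.
have aj_neq : ord_res (a j) != (j * n)%N%:Z.
  apply: contraTneq j_gt0 => ja; rewrite -leqNgt leqn0; apply/eqP.
  apply: (ord_term_inj aj (oner_neq0 K) (ltn_ord j) (prime_gt0 pr)).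
  by rewrite ja subrr (valuation1 ord_resM) mul0n subr0.
have jn : (j.-1 * n + n = j * n)%N by rewrite -mulSnr prednK.
apply: ord_geW (ord_geM ordM (or_intror (lexx (ord_res (a j)))) (ord_expDn_sub c j)) _.
by move: aj_ge aj_neq; rewrite -jn; set A := ord_res (a j); nia.
Qed.

Lemma ram_group_full i : (0 < i <= n)%N -> ram_group ord i = Gcov L.
Proof.
case/andP=> _ i_le; apply/setP => s; rewrite inE; case Gs: (s \in Gcov L) => //=.
by apply: pbT => x /(gal_sub_ord_ge Gs) /ord_geW; apply; rewrite lez_nat ltnS.
Qed.

Lemma dprime_ge d' : dprime ord = Some d' -> (n * p.-1 <= d')%N.
Proof.
move=> /(@series_nat_ge _ _ n.+1); rewrite big_ord_recl add0n.
rewrite (eq_bigr (fun=> p.-1)) ?sum_nat_const ?card_ord // => i _.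
by rewrite /= ram_group_full ?cardG ?subn1 //= ltn_ord.
Qed.
End Pole.

Lemma z_ord_ge_neg_dprime : ord_ge_neg_dprime ord (y ^+ p.-1).
Proof.
rewrite /ord_ge_neg_dprime; case dP: (dprime ord) => [d'|] //; right.
rewrite (valuationX ordM _ y_neq0).
have [y_ge0 | y_lt0] := lerP 0 (ord y); first by move: y_ge0; set o := ord y; nia.
have ord_y : ord y = - `|ord y|%N%:Z by rewrite ltz0_abs ?opprK.
have := dprime_ge ord_y _ dP; rewrite absz_gt0 lt_eqF // => /(_ isT).
by rewrite ord_y; set m := `|ord y|%N; nia.
Qed.
End Place.
End ArtinSchreierCover.

Theorem lemma7p2 (k : closedFieldType) (p : nat) (K : fieldType)
    (iota : {rmorphism k -> K}) (L : splittingFieldType K)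
    (sigma : gal_of {:L}) (y : L) (f : K) :
  prime p -> p \in [pchar k] ->
  function_field_1 iota ->
  galois 1%VS {:L} -> #|Gcov L| = p -> <[sigma]>%g = Gcov L ->
  AS_generator p sigma y f -> global_standard_form iota p f ->
  let z := y ^+ p.-1 in
  let zdual := z - 2%:R in
  [/\ (forall ord : L -> int, pointX iota ord -> ord_ge_neg_dprime ord z),
      galTrace 1%VS {:L} z != 0 &
      forall g1 g2 : gal_of {:L}, g1 \in Gcov L -> g2 \in Gcov L ->
        galTrace 1%VS {:L} (g1 z * g2 zdual) = (g1 == g2)%:R].
Proof.
move=> pr chk _ galL cardG gen AS gsf z zdual; split.
- by move=> ord X_ord; apply: (z_ord_ge_neg_dprime pr chk cardG gen AS galL X_ord gsf).
- by rewrite (galTrace_z iota pr chk cardG gen AS) oppr_eq0 oner_eq0.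
- by move=> g1 g2; apply: (galTrace_z_dual iota pr chk cardG gen AS).
Qed.
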